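(* In every standard NML model, let $\phi$ be a pattern of sort $\tau$ whose free variables are among $\vec x$ and whose free names are among $\vec{\mathsf b}$ together with possibly $\mathsf a{:}\alpha$ (with $\mathsf a$ not among $\vec{\mathsf b}$), let $z_{\mathsf a}{:}\alpha$ be a variable not occurring elsewhere, and let $\phi\{\mathsf a\mapsto z_{\mathsf a}\}$ be the result of replacing the name $\mathsf a$ by $z_{\mathsf a}$ in $\phi$. Then (1) $\text{И}\mathsf a{:}\alpha.\phi\iff\exists z_{\mathsf a}{:}\alpha.\Big(\big(\exists y{:}\tau.\ y\wedge\lceil z_{\mathsf a}\#(\vec{\mathsf b},\vec x,y)\rceil\big)\wedge\phi\{\mathsf a\mapsto z_{\mathsf a}\}\Big)$; (2) $\text{И}\mathsf a{:}\alpha.\phi\iff\forall z_{\mathsf a}{:}\alpha.\Big(\big(\exists y{:}\tau.\ y\wedge\lceil z_{\mathsf a}\#(\vec{\mathsf b},\vec x,y)\rceil\big)\Rightarrow\phi\{\mathsf a\mapsto z_{\mathsf a}\}\Big)$.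
   Context: NML patterns: $\phi::= x \mid \mathsf a \mid \phi\wedge\psi\mid\neg\phi\mid\exists x.\phi\mid\sigma(\phi_1,\dots,\phi_n)\mid \text{И}\mathsf a{:}\alpha.\phi$ (names separate from variables; И binds names); $\phi\Rightarrow\psi:=\neg\phi\vee\psi$ and $\forall x.\phi:=\neg\exists x.\neg\phi$. $(\vec{\mathsf b},\vec x,y)$ is a tuple (product sort), $\#:\alpha\times\tau'\to Pred$ the freshness symbol, $\lceil\cdot\rceil:Pred\to\tau$ the coercion. NML models: atoms $\mathbb A=\bigcup_\alpha\mathbb A_\alpha$, $G$ the sort-respecting permutations; carriers nonempty nominal $G$-sets; symbols equivariant set-valued maps. Standard models: name sorts are $\mathbb A_\alpha$, $M_{Pred}=\{\star\}$, $\lceil\cdot\rceil$ maps $\star$ to $M_\tau$, $\#$ holds of $(a,v)$ iff $a\notin supp(v)$, products are componentwise, and abstraction/swapping/concretion are canonical. Valuations: finite-domain, sort-respecting, finitely supported, injective on names. Semantics: $[\![x]\!]_\rho=\{\rho(x)\}$, $[\![\mathsf a]\!]_\rho=\{\rho(\mathsf a)\}$, symbols extended pointwise, $\wedge$ intersection, $\neg$ complement, $\exists$ union over values, $[\![\text{И}\mathsf a{:}\alpha.\phi]\!]_\rho=\bigcup_{a\in\mathbb A_\alpha\setminus supp(\rho)}\{v\in[\![\phi]\!]_{\rho[a/\mathsf a]}\mid a\notin supp(v)\}$. $\phi\iff\psi$ means equal denotations under every suitable valuation. *)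

From Stdlib Require Import List PeanoNat.
Import ListNotations.

Inductive sort (NS BS : Type) : Type :=
| SName (al : NS)
| SBase (b : BS)
| SPred
| SProd (s1 s2 : sort NS BS).
Arguments SName {NS BS} al.
Arguments SBase {NS BS} b.
Arguments SPred {NS BS}.
Arguments SProd {NS BS} s1 s2.

Record signature := Sig {
  NS : Type;
  BS : Type;
  NS_dec : forall x y : NS, {x = y} + {x <> y};
  BS_dec : forall x y : BS, {x = y} + {x <> y};
  Sym : Type;
  sym_args : Sym -> list (sort NS BS);
  sym_res : Sym -> sort NS BS }.

Section Syntax.
Variable Sg : signature.
Local Notation srt := (sort (NS Sg) (BS Sg)).

Definition sort_dec : forall s t : srt, {s = t} + {s <> t}.
Proof. decide equality; first [apply (NS_dec Sg) | apply (BS_dec Sg)]. Defined.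

Definition atom : Type := (NS Sg * nat)%type.

Record perm := Perm {
  pf : atom -> atom;
  pinv : atom -> atom;
  pf_pinv : forall a, pf (pinv a) = a;
  pinv_pf : forall a, pinv (pf a) = a;
  pf_sort : forall a, fst (pf a) = fst a;
  pf_fin : exists l : list atom, forall a, ~ In a l -> pf a = a }.

Definition perm_id : perm.
Proof.
  refine (Perm (fun a => a) (fun a => a) _ _ _ _); try reflexivity.
  exists nil; reflexivity.
Defined.

Definition perm_comp (p1 p2 : perm) : perm.
Proof.
  refine (Perm (fun a => pf p1 (pf p2 a)) (fun a => pinv p2 (pinv p1 a)) _ _ _ _).
  - intro a; rewrite pf_pinv, pf_pinv; reflexivity.
  - intro a; rewrite pinv_pf, pinv_pf; reflexivity.
  - intro a; rewrite pf_sort, pf_sort; reflexivity.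
  - destruct (pf_fin p1) as [l1 H1]; destruct (pf_fin p2) as [l2 H2].
    exists (l1 ++ l2); intros a Ha; rewrite in_app_iff in Ha.
    rewrite (H2 a), (H1 a); tauto.
Defined.

Definition supports {T : Type} (actT : perm -> T -> T) (S : list atom) (x : T) : Prop :=
  forall p : perm, (forall a, In a S -> pf p a = a) -> actT p x = x.
Definition in_supp {T : Type} (actT : perm -> T -> T) (a : atom) (x : T) : Prop :=
  forall S : list atom, supports actT S x -> In a S.

Fixpoint car (C : BS Sg -> Type) (s : srt) : Type :=
  match s with
  | SName al => {a : atom | fst a = al}
  | SBase b => C b
  | SPred => unit
  | SProd s1 s2 => (car C s1 * car C s2)%type
  end.

Fixpoint cars (C : BS Sg -> Type) (l : list srt) : Type :=
  match l with
  | nil => unit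
  | s :: l' => (car C s * cars C l')%type
  end.

Definition act_atom (p : perm) (al : NS Sg) (a : {a : atom | fst a = al}) :
  {a : atom | fst a = al} :=
  exist _ (pf p (proj1_sig a)) (eq_trans (pf_sort p (proj1_sig a)) (proj2_sig a)).

Fixpoint act (C : BS Sg -> Type) (A : forall b, perm -> C b -> C b) (p : perm)
  (s : srt) : car C s -> car C s :=
  match s return car C s -> car C s with
  | SName al => act_atom p al
  | SBase b => A b p
  | SPred => fun u => u
  | SProd s1 s2 => fun v => (act C A p s1 (fst v), act C A p s2 (snd v))
  end.

Fixpoint acts (C : BS Sg -> Type) (A : forall b, perm -> C b -> C b) (p : perm)
  (l : list srt) : cars C l -> cars C l :=
  match l return cars C l -> cars C l with
  | nil => fun u => u
  | s :: l' => fun v => (act C A p s (fst v), acts C A p l' (snd v))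
  end.

(* Standard NML models (for the signature, with base sorts arbitrary
   nonempty nominal G-sets and symbols arbitrary equivariant set-valued maps). *)
Record model := Model {
  mcar : BS Sg -> Type;
  mact : forall b, perm -> mcar b -> mcar b;
  mact_id : forall b x, mact b perm_id x = x;
  mact_comp : forall b p1 p2 x, mact b (perm_comp p1 p2) x = mact b p1 (mact b p2 x);
  mfin : forall b x, exists S : list atom, supports (mact b) S x;
  mnonempty : forall b, inhabited (mcar b);
  minterp : forall sg : Sym Sg,
      cars mcar (sym_args Sg sg) -> car mcar (sym_res Sg sg) -> Prop;
  minterp_equiv : forall sg (p : perm) u v,
      minterp sg u v <->
      minterp sg (acts mcar mact p _ u) (act mcar mact p _ v) }.

(* Patterns.  Variables are pairs (x, s) (name x, sort s); names are pairs
   (n, al).  PEx x t binds the variable (x,t); PNew n al binds the name (n,al). *)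
Inductive pat : srt -> Type :=
| PVar (x : nat) (s : srt) : pat s
| PName (n : nat) (al : NS Sg) : pat (SName al)
| PAnd (s : srt) : pat s -> pat s -> pat s
| PNot (s : srt) : pat s -> pat s
| PEx (s : srt) (x : nat) (t : srt) : pat s -> pat s
| PSym (sg : Sym Sg) : pats (sym_args Sg sg) -> pat (sym_res Sg sg)
| PNew (s : srt) (n : nat) (al : NS Sg) : pat s -> pat s
| PPair (s1 s2 : srt) : pat s1 -> pat s2 -> pat (SProd s1 s2)
| PFresh (al : NS Sg) (t : srt) : pat (SName al) -> pat t -> pat SPred
| PCeil (t : srt) : pat SPred -> pat t
with pats : list srt -> Type :=
| PNil : pats nil
| PCons (s : srt) (l : list srt) : pat s -> pats l -> pats (s :: l).

Arguments PAnd {s}. Arguments PNot {s}. Arguments PEx {s}. Arguments PNew {s}.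
Arguments PPair {s1 s2}. Arguments PFresh {al t}. Arguments PCons {s l}.

Definition POr {s} (p q : pat s) : pat s := PNot (PAnd (PNot p) (PNot q)).
Definition PImp {s} (p q : pat s) : pat s := POr (PNot p) q.
Definition PAll {s} (x : nat) (t : srt) (p : pat s) : pat s := PNot (PEx x t (PNot p)).

Definition var_eqb (v w : nat * srt) : bool :=
  if Nat.eq_dec (fst v) (fst w) then if sort_dec (snd v) (snd w) then true else false
  else false.
Definition name_eqb (v w : nat * NS Sg) : bool :=
  if Nat.eq_dec (fst v) (fst w) then if NS_dec Sg (snd v) (snd w) then true else false
  else false.

Fixpoint fvars {s} (p : pat s) : list (nat * srt) :=
  match p with
  | PVar x s0 => [(x, s0)]
  | PName _ _ => nil
  | PAnd p1 p2 => fvars p1 ++ fvars p2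
  | PNot p1 => fvars p1
  | PEx x t p1 => filter (fun v => negb (var_eqb v (x, t))) (fvars p1)
  | PSym _ ps => fvars_args ps
  | PNew _ _ p1 => fvars p1
  | PPair p1 p2 => fvars p1 ++ fvars p2
  | PFresh p1 p2 => fvars p1 ++ fvars p2
  | PCeil _ p1 => fvars p1
  end
with fvars_args {l} (ps : pats l) : list (nat * srt) :=
  match ps with
  | PNil => nil
  | PCons p1 ps' => fvars p1 ++ fvars_args ps'
  end.

Fixpoint allvars {s} (p : pat s) : list (nat * srt) :=
  match p with
  | PVar x s0 => [(x, s0)]
  | PName _ _ => nil
  | PAnd p1 p2 => allvars p1 ++ allvars p2
  | PNot p1 => allvars p1
  | PEx x t p1 => (x, t) :: allvars p1
  | PSym _ ps => allvars_args ps
  | PNew _ _ p1 => allvars p1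
  | PPair p1 p2 => allvars p1 ++ allvars p2
  | PFresh p1 p2 => allvars p1 ++ allvars p2
  | PCeil _ p1 => allvars p1
  end
with allvars_args {l} (ps : pats l) : list (nat * srt) :=
  match ps with
  | PNil => nil
  | PCons p1 ps' => allvars p1 ++ allvars_args ps'
  end.

Fixpoint fnames {s} (p : pat s) : list (nat * NS Sg) :=
  match p with
  | PVar _ _ => nil
  | PName n al => [(n, al)]
  | PAnd p1 p2 => fnames p1 ++ fnames p2
  | PNot p1 => fnames p1
  | PEx _ _ p1 => fnames p1
  | PSym _ ps => fnames_args ps
  | PNew n al p1 => filter (fun v => negb (name_eqb v (n, al))) (fnames p1)
  | PPair p1 p2 => fnames p1 ++ fnames p2
  | PFresh p1 p2 => fnames p1 ++ fnames p2
  | PCeil _ p1 => fnames p1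
  end
with fnames_args {l} (ps : pats l) : list (nat * NS Sg) :=
  match ps with
  | PNil => nil
  | PCons p1 ps' => fnames p1 ++ fnames_args ps'
  end.

Fixpoint nsubst (a : nat) (al : NS Sg) (z : nat) {s} (p : pat s) : pat s :=
  match p in pat s0 return pat s0 with
  | PVar x s0 => PVar x s0
  | PName n be =>
      if name_eqb (n, be) (a, al) then PVar z (SName be) else PName n be
  | PAnd p1 p2 => PAnd (nsubst a al z p1) (nsubst a al z p2)
  | PNot p1 => PNot (nsubst a al z p1)
  | PEx x t p1 => PEx x t (nsubst a al z p1)
  | PSym sg ps => PSym sg (nsubst_args a al z ps)
  | PNew n be p1 =>
      if name_eqb (n, be) (a, al) then PNew n be p1 else PNew n be (nsubst a al z p1)
  | PPair p1 p2 => PPair (nsubst a al z p1) (nsubst a al z p2)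
  | PFresh p1 p2 => PFresh (nsubst a al z p1) (nsubst a al z p2)
  | PCeil t p1 => PCeil t (nsubst a al z p1)
  end
with nsubst_args (a : nat) (al : NS Sg) (z : nat) {l} (ps : pats l) : pats l :=
  match ps in pats l0 return pats l0 with
  | PNil => PNil
  | PCons p1 ps' => PCons (nsubst a al z p1) (nsubst_args a al z ps')
  end.

(* The tuple (b_1, ..., b_k, x_1, ..., x_m, y), as right-nested pairs. *)
Fixpoint xs_sort (xs : list (nat * srt)) (tau : srt) : srt :=
  match xs with
  | nil => tau
  | v :: xs' => SProd (snd v) (xs_sort xs' tau)
  end.
Fixpoint xs_tup (xs : list (nat * srt)) (y : nat) (tau : srt) : pat (xs_sort xs tau) :=
  match xs as l return pat (xs_sort l tau) with
  | nil => PVar y tau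
  | v :: xs' => PPair (PVar (fst v) (snd v)) (xs_tup xs' y tau)
  end.
Fixpoint bs_sort (bs : list (nat * NS Sg)) (T : srt) : srt :=
  match bs with
  | nil => T
  | b :: bs' => SProd (SName (snd b)) (bs_sort bs' T)
  end.
Fixpoint bs_tup (bs : list (nat * NS Sg)) {T : srt} (t : pat T) : pat (bs_sort bs T) :=
  match bs as l return pat (bs_sort l T) with
  | nil => t
  | b :: bs' => PPair (PName (fst b) (snd b)) (bs_tup bs' t)
  end.
Definition tuple_pat (bs : list (nat * NS Sg)) (xs : list (nat * srt)) (y : nat)
  (tau : srt) : pat (bs_sort bs (xs_sort xs tau)) :=
  bs_tup bs (xs_tup xs y tau).

Definition fresh_guard (al : NS Sg) (z : nat) (bs : list (nat * NS Sg))
  (xs : list (nat * srt)) (y : nat) (tau : srt) : pat tau :=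
  PEx y tau (PAnd (PVar y tau)
                  (PCeil tau (PFresh (PVar z (SName al)) (tuple_pat bs xs y tau)))).

End Syntax.

Arguments PVar {Sg}. Arguments PName {Sg}. Arguments PAnd {Sg s}. Arguments PNot {Sg s}.
Arguments PEx {Sg s}. Arguments PSym {Sg}. Arguments PNew {Sg s}. Arguments PPair {Sg s1 s2}.
Arguments PFresh {Sg al t}. Arguments PCeil {Sg}. Arguments PNil {Sg}. Arguments PCons {Sg s l}.
Arguments POr {Sg s}. Arguments PImp {Sg s}. Arguments PAll {Sg s}.
Arguments fvars {Sg s}. Arguments allvars {Sg s}. Arguments fnames {Sg s}.
Arguments nsubst {Sg} a al z {s}.
Arguments fresh_guard {Sg}.

Section Semantics.
Variable Sg : signature.
Variable M : model Sg.
Local Notation srt := (sort (NS Sg) (BS Sg)).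
Local Notation carM := (car Sg (mcar Sg M)).
Local Notation actM p s := (act Sg (mcar Sg M) (mact Sg M) p s).
Definition suppM (s : srt) (a : atom Sg) (v : carM s) : Prop :=
  in_supp Sg (fun p => actM p s) a v.

Record valuation := Val {
  vvar : nat -> forall s : srt, option (carM s);
  vname : nat -> forall al : NS Sg, option (carM (SName al)) }.

Definition valid_val (r : valuation) : Prop :=
  (exists LV : list (nat * srt), forall x s, vvar r x s <> None -> In (x, s) LV) /\
  (exists LN : list (nat * NS Sg), forall n al, vname r n al <> None -> In (n, al) LN) /\
  (exists S : list (atom Sg),
      (forall x s v, vvar r x s = Some v -> supports Sg (fun p => actM p s) S v) /\
      (forall n al v, vname r n al = Some v ->
                      supports Sg (fun p => actM p (SName al)) S v)) /\
  (forall n al m be (u : carM (SName al)) (w : carM (SName be)),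
      vname r n al = Some u -> vname r m be = Some w ->
      proj1_sig u = proj1_sig w -> n = m /\ al = be).

Definition val_supp (r : valuation) (a : atom Sg) : Prop :=
  (exists x s v, vvar r x s = Some v /\ suppM s a v) \/
  (exists n al (u : carM (SName al)), vname r n al = Some u /\ proj1_sig u = a).

Definition upd_var (r : valuation) (x : nat) (t : srt) (u : carM t) : valuation :=
  Val (fun y s => match Nat.eq_dec y x with
                  | left _ => match sort_dec Sg t s with
                              | left e => Some (eq_rect t carM u s e)
                              | right _ => vvar r y s
                              end
                  | right _ => vvar r y s
                  end)
      (vname r).

Definition upd_name (r : valuation) (n : nat) (al : NS Sg) (u : carM (SName al)) :
  valuation :=
  Val (vvar r)
      (fun m be => match Nat.eq_dec m n with
                   | left _ => match NS_dec Sg al be with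
                               | left e => Some (eq_rect al (fun g => carM (SName g)) u be e)
                               | right _ => vname r m be
                               end
                   | right _ => vname r m be
                   end).

Fixpoint denote {s} (p : pat Sg s) (r : valuation) {struct p} : carM s -> Prop :=
  match p in pat _ s0 return carM s0 -> Prop with
  | PVar x s0 => fun v => vvar r x s0 = Some v
  | PName n al => fun v => vname r n al = Some v
  | PAnd p1 p2 => fun v => denote p1 r v /\ denote p2 r v
  | PNot p1 => fun v => ~ denote p1 r v
  | PEx x t p1 => fun v => exists u : carM t, denote p1 (upd_var r x t u) v
  | PSym sg ps => fun v =>
      exists u, denote_args ps r u /\ minterp Sg M sg u v
  | @PNew _ s0 n al p1 => fun v =>
      exists a0 : carM (SName al),
        ~ val_supp r (proj1_sig a0) /\
        denote p1 (upd_name r n al a0) v /\ ~ suppM s0 (proj1_sig a0) v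
  | PPair p1 p2 => fun v => denote p1 r (fst v) /\ denote p2 r (snd v)
  | @PFresh _ al t p1 p2 => fun _ =>
      exists (a0 : carM (SName al)) (u : carM t),
        denote p1 r a0 /\ denote p2 r u /\ ~ suppM t (proj1_sig a0) u
  | PCeil t p1 => fun _ => exists u : unit, denote p1 r u
  end
with denote_args {l} (ps : pats Sg l) (r : valuation) {struct ps} :
  cars Sg (mcar Sg M) l -> Prop :=
  match ps in pats _ l0 return cars Sg (mcar Sg M) l0 -> Prop with
  | PNil => fun _ => True
  | PCons p1 ps' => fun u => denote p1 r (fst u) /\ denote_args ps' r (snd u)
  end.

Definition suitable (r : valuation) {s} (p : pat Sg s) : Prop :=
  (forall v, In v (fvars p) -> vvar r (fst v) (snd v) <> None) /\
  (forall n, In n (fnames p) -> vname r (fst n) (snd n) <> None).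

Definition pequiv {s} (p q : pat Sg s) : Prop :=
  forall r : valuation, valid_val r -> suitable r p -> suitable r q ->
  forall v : carM s, denote p r v <-> denote q r v.

End Semantics.

Arguments pequiv {Sg} M {s}.

From Stdlib Require Import List Lia PeanoNat Classical FunctionalExtensionality
  ProofIrrelevance Eqdep_dec.
Import ListNotations.

(* The guard [exists y. y /\ ceil (z # (bs, xs, y))] holds at a value v exactly
   when z is an atom fresh for the values of the names bs, of the variables xs,
   and for v itself, i.e. exactly the atoms over which the И-quantifier ranges.
   The core is an equivariance lemma for the substitution phi{a |-> z}: if a
   second valuation is the image of the first under an atom permutation p, except
   that the name a of the first is read as the variable z of the second, then the
   denotation of phi under the first valuation is mapped by p onto that of
   phi{a |-> z} under the second.  Applied to the transposition of two atoms that
   are both fresh in the above sense (which fixes everything phi can see), it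
   shows that phi with a := a0 and phi{a |-> z} with z := a1 agree at v.  Since
   fresh atoms always exist, both the existential and the universal reading of
   the guarded quantifier coincide with И. *)

Scheme pat_mut := Induction for pat Sort Prop with pats_mut := Induction for pats Sort Prop.
Combined Scheme pat_pats_ind from pat_mut, pats_mut.

Lemma nat_fresh (L : list nat) : exists n, ~ In n L.
Proof.
  exists (S (list_max L)); intro H.
  pose proof (proj1 (list_max_le L _) (le_n _)) as K.
  rewrite Forall_forall in K; specialize (K _ H); lia.
Qed.

Section Nominal.
Variable Sg : signature.
Local Notation atm := (atom Sg).
Local Notation PF := (pf Sg).

Definition atom_dec (a b : atm) : {a = b} + {a <> b}.
Proof. decide equality; [apply Nat.eq_dec | apply (NS_dec Sg)]. Defined.

Lemma fresh_atom (L : list atm) al : exists c : atm, fst c = al /\ ~ In c L.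
Proof.
  destruct (nat_fresh (map snd L)) as [n Hn].
  exists (al, n); split; [reflexivity|].
  intro H; apply Hn, (in_map snd L (al, n) H).
Qed.

Lemma perm_ext (p q : perm Sg) : (forall a, PF p a = PF q a) -> p = q.
Proof.
  destruct p as [f fi H1 H2 H3 H4], q as [g gi K1 K2 K3 K4]; simpl; intro E.
  assert (f = g) by (apply functional_extensionality; auto); subst g.
  assert (fi = gi).
  { apply functional_extensionality; intro a.
    rewrite <- (K1 a) at 1; rewrite H2; reflexivity. }
  subst gi; f_equal; apply proof_irrelevance.
Qed.

Definition perm_inv (p : perm Sg) : perm Sg.
Proof.
  refine (Perm Sg (pinv Sg p) (pf Sg p) (pinv_pf Sg p) (pf_pinv Sg p) _ _).
  - intro a; rewrite <- (pf_sort Sg p (pinv Sg p a)), pf_pinv; reflexivity.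
  - destruct (pf_fin Sg p) as [l H]; exists l; intros a Ha.
    rewrite <- (H a Ha) at 1; apply pinv_pf.
Defined.

Lemma perm_comp_inv_r p : perm_comp Sg p (perm_inv p) = perm_id Sg.
Proof. apply perm_ext; intro a; apply pf_pinv. Qed.

Lemma perm_comp_inv_l p : perm_comp Sg (perm_inv p) p = perm_id Sg.
Proof. apply perm_ext; intro a; apply pinv_pf. Qed.

Definition swap_atom (a b c : atm) : atm :=
  if atom_dec c a then b else if atom_dec c b then a else c.

Lemma swap_atom_involutive a b c : swap_atom a b (swap_atom a b c) = c.
Proof. unfold swap_atom; repeat destruct atom_dec; subst; congruence. Qed.

Definition perm_swap (a b : atm) (H : fst a = fst b) : perm Sg.
Proof.
  refine (Perm Sg (swap_atom a b) (swap_atom a b)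
            (swap_atom_involutive a b) (swap_atom_involutive a b) _ _).
  - intro c; unfold swap_atom; repeat destruct atom_dec; subst; congruence.
  - exists [a; b]; intros c Hc; simpl in Hc.
    unfold swap_atom; repeat destruct atom_dec; subst; tauto.
Defined.

Lemma perm_swap_fix_out a b H (S : list atm) :
  ~ In a S -> ~ In b S -> forall c, In c S -> PF (perm_swap a b H) c = c.
Proof. intros Ha Hb c Hc; simpl; unfold swap_atom; repeat destruct atom_dec; subst; tauto. Qed.

End Nominal.

Arguments atom_dec {Sg}. Arguments perm_inv {Sg}. Arguments perm_swap {Sg}.
Arguments swap_atom {Sg}.

Section Syntax.
Variable Sg : signature.

Definition name_dec (v w : nat * NS Sg) : {v = w} + {v <> w}.
Proof. decide equality; [apply (NS_dec Sg) | apply Nat.eq_dec]. Defined.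

Definition var_dec (v w : nat * sort (NS Sg) (BS Sg)) : {v = w} + {v <> w}.
Proof. decide equality; [apply sort_dec | apply Nat.eq_dec]. Defined.

Lemma name_eqb_eq v w : name_eqb Sg v w = true <-> v = w.
Proof.
  destruct v as [n a], w as [m b]; unfold name_eqb; simpl.
  destruct (Nat.eq_dec n m), (NS_dec Sg a b); subst; split; congruence.
Qed.

Lemma var_eqb_eq v w : var_eqb Sg v w = true <-> v = w.
Proof.
  destruct v as [n a], w as [m b]; unfold var_eqb; simpl.
  destruct (Nat.eq_dec n m), (sort_dec Sg a b); subst; split; congruence.
Qed.

Lemma name_eqb_neq v w : v <> w -> name_eqb Sg v w = false.
Proof. rewrite <- name_eqb_eq; destruct name_eqb; congruence. Qed.

Lemma in_fnames_new m s n be (q : pat Sg s) :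
  In m (fnames (PNew n be q)) <-> In m (fnames q) /\ m <> (n, be).
Proof.
  simpl; rewrite filter_In, Bool.negb_true_iff, <- name_eqb_eq, Bool.not_true_iff_false.
  reflexivity.
Qed.

Lemma in_fvars_ex v s x t (q : pat Sg s) :
  In v (fvars (PEx x t q)) <-> In v (fvars q) /\ v <> (x, t).
Proof.
  simpl; rewrite filter_In, Bool.negb_true_iff, <- var_eqb_eq, Bool.not_true_iff_false.
  reflexivity.
Qed.

Lemma fvars_bs_tup bs T (t : pat Sg T) : fvars (bs_tup Sg bs t) = fvars t.
Proof. induction bs; simpl; auto. Qed.

Lemma fnames_bs_tup bs T (t : pat Sg T) n : In n bs -> In n (fnames (bs_tup Sg bs t)).
Proof. induction bs as [|[m ga] l IH]; simpl; [contradiction|]; intros [<-|H]; auto. Qed.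

Lemma fvars_xs_tup xs y tau v : In v xs -> In v (fvars (xs_tup Sg xs y tau)).
Proof. induction xs as [|[x s] l IH]; simpl; [contradiction|]; intros [<-|H]; auto. Qed.

Lemma nsubst_fresh a al z :
  (forall s (q : pat Sg s), ~ In (a, al) (fnames q) -> nsubst a al z q = q) /\
  (forall l (qs : pats Sg l),
      ~ In (a, al) (fnames_args Sg qs) -> nsubst_args Sg a al z qs = qs).
Proof.
  apply pat_pats_ind; intros; simpl in *; try rewrite in_app_iff in *;
    try (f_equal; auto; fail).
  - rewrite name_eqb_neq; [reflexivity|]; intro E; apply H; left; congruence.
  - destruct (name_eqb Sg (n, al0) (a, al)) eqn:E; [reflexivity|].
    f_equal; apply H; intro K; apply H0, (in_fnames_new _ _ n al0 p); split; [exact K|].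
    intro K'; rewrite <- K', (proj2 (name_eqb_eq _ _) eq_refl) in E; discriminate.
Qed.

Lemma fvars_in_allvars :
  (forall s (q : pat Sg s) v, In v (fvars q) -> In v (allvars q)) /\
  (forall l (qs : pats Sg l) v, In v (fvars_args Sg qs) -> In v (allvars_args Sg qs)).
Proof.
  apply pat_pats_ind; intros; simpl in *; try rewrite in_app_iff in *; try tauto; firstorder.
  apply filter_In in H0; right; firstorder.
Qed.

End Syntax.

Arguments name_dec {Sg}. Arguments var_dec {Sg}.
Arguments name_eqb_eq {Sg}. Arguments name_eqb_neq {Sg}.
Arguments in_fnames_new {Sg}. Arguments in_fvars_ex {Sg}.
Arguments fvars_bs_tup {Sg}. Arguments fnames_bs_tup {Sg}. Arguments fvars_xs_tup {Sg}.

Section Model.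
Variable Sg : signature.
Variable M : model Sg.
Local Notation srt := (sort (NS Sg) (BS Sg)).
Local Notation atm := (atom Sg).
Local Notation PF := (pf Sg).
Local Notation carM := (car Sg (mcar Sg M)).
Local Notation carsM := (cars Sg (mcar Sg M)).
Local Notation actM p s := (act Sg (mcar Sg M) (mact Sg M) p s).
Local Notation actsM p l := (acts Sg (mcar Sg M) (mact Sg M) p l).
Local Notation supp s a x := (suppM Sg M s a x).

Definition supported s (S : list atm) (x : carM s) : Prop :=
  supports Sg (fun p => actM p s) S x.

Lemma name_eq al (u w : carM (SName al)) : proj1_sig u = proj1_sig w -> u = w.
Proof. destruct u, w; simpl; intro; subst; f_equal; apply proof_irrelevance. Qed.

Lemma act_id s (x : carM s) : actM (perm_id Sg) s x = x.
Proof.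
  induction s; simpl.
  - apply name_eq; reflexivity.
  - apply mact_id.
  - reflexivity.
  - rewrite IHs1, IHs2; destruct x; reflexivity.
Qed.

Lemma act_comp s p q (x : carM s) :
  actM (perm_comp Sg p q) s x = actM p s (actM q s x).
Proof.
  induction s; simpl.
  - apply name_eq; reflexivity.
  - apply mact_comp.
  - reflexivity.
  - rewrite IHs1, IHs2; reflexivity.
Qed.

Lemma acts_id l (x : carsM l) : actsM (perm_id Sg) l x = x.
Proof. induction l; simpl; [reflexivity|]. rewrite act_id, IHl; destruct x; reflexivity. Qed.

Lemma acts_comp l p q (x : carsM l) :
  actsM (perm_comp Sg p q) l x = actsM p l (actsM q l x).
Proof. induction l; simpl; [reflexivity|]. rewrite act_comp, IHl; reflexivity. Qed.

Lemma act_act_inv p s (x : carM s) : actM p s (actM (perm_inv p) s x) = x.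
Proof. rewrite <- act_comp, perm_comp_inv_r; apply act_id. Qed.

Lemma act_inv_act p s (x : carM s) : actM (perm_inv p) s (actM p s x) = x.
Proof. rewrite <- act_comp, perm_comp_inv_l; apply act_id. Qed.

Lemma acts_acts_inv p l (x : carsM l) : actsM p l (actsM (perm_inv p) l x) = x.
Proof. rewrite <- acts_comp, perm_comp_inv_r; apply acts_id. Qed.

Lemma act_inj p s (x w : carM s) : actM p s x = actM p s w -> x = w.
Proof. intro H; rewrite <- (act_inv_act p s x), H; apply act_inv_act. Qed.

Lemma ex_act_iff p s (P Q : carM s -> Prop) :
  (forall u, P u <-> Q (actM p s u)) -> (exists u, P u) <-> (exists u, Q u).
Proof.
  intro H; split; intros [u Hu].
  - exists (actM p s u); apply H, Hu.
  - exists (actM (perm_inv p) s u); apply H; rewrite act_act_inv; exact Hu.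
Qed.

Lemma ex_acts_iff p l (P Q : carsM l -> Prop) :
  (forall u, P u <-> Q (actsM p l u)) -> (exists u, P u) <-> (exists u, Q u).
Proof.
  intro H; split; intros [u Hu].
  - exists (actsM p l u); apply H, Hu.
  - exists (actsM (perm_inv p) l u); apply H; rewrite acts_acts_inv; exact Hu.
Qed.

Lemma option_map_act_inj p s (o : option (carM s)) v :
  option_map (actM p s) o = Some (actM p s v) <-> o = Some v.
Proof.
  destruct o; simpl; split; intro H; try discriminate.
  - injection H; intro E; apply act_inj in E; subst; reflexivity.
  - injection H; intro; subst; reflexivity.
Qed.

(** * Supports *)

Lemma supported_app_l s S T (x : carM s) : supported s S x -> supported s (S ++ T) x.
Proof. intros H p Hp; apply H; intros; apply Hp, in_or_app; auto. Qed.

Lemma supported_app_r s S T (x : carM s) : supported s T x -> supported s (S ++ T) x.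
Proof. intros H p Hp; apply H; intros; apply Hp, in_or_app; auto. Qed.

Lemma supported_pair s1 s2 S T (w : carM (SProd s1 s2)) :
  supported s1 S (fst w) -> supported s2 T (snd w) -> supported (SProd s1 s2) (S ++ T) w.
Proof.
  intros H1 H2 p Hp; destruct w as [w1 w2]; simpl in *.
  f_equal; [apply H1 | apply H2]; intros; apply Hp, in_or_app; auto.
Qed.

Lemma supported_name al (u : carM (SName al)) : supported (SName al) [proj1_sig u] u.
Proof. intros p Hp; apply name_eq; simpl; apply Hp; left; reflexivity. Qed.

Lemma finitely_supported s (x : carM s) : exists S, supported s S x.
Proof.
  induction s; simpl in *.
  - exists [proj1_sig x]; apply supported_name.
  - apply (mfin Sg M).
  - exists nil; intros p _; reflexivity.
  - destruct (IHs1 (fst x)) as [S1 H1], (IHs2 (snd x)) as [S2 H2].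
    exists (S1 ++ S2); apply supported_pair; assumption.
Qed.

Lemma supported_act s S p (x : carM s) :
  supported s S x -> supported s (map (PF p) S) (actM p s x).
Proof.
  intros H q Hq.
  set (q' := perm_comp Sg (perm_inv p) (perm_comp Sg q p)).
  assert (Hq' : forall a, In a S -> PF q' a = a).
  { intros a Ha; simpl; rewrite (Hq (PF p a)); [apply pinv_pf | apply in_map; exact Ha]. }
  transitivity (actM p s (actM q' s x)).
  - unfold q'; rewrite !act_comp, act_act_inv; reflexivity.
  - rewrite (H q' Hq'); reflexivity.
Qed.

Lemma supp_act s a p (x : carM s) : supp s a x -> supp s (PF p a) (actM p s x).
Proof.
  intros H S HS.
  pose proof (supported_act s S (perm_inv p) _ HS) as K; rewrite act_inv_act in K.
  apply H, in_map_iff in K; destruct K as [c [E Hc]]; simpl in E.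
  subst; rewrite pf_pinv; exact Hc.
Qed.

Lemma supp_act_iff s a p (x : carM s) : supp s (PF p a) (actM p s x) <-> supp s a x.
Proof.
  split; [|apply supp_act].
  intro H; apply (supp_act _ _ (perm_inv p)) in H; simpl in H.
  rewrite pinv_pf, act_inv_act in H; exact H.
Qed.

Lemma notin_supp_iff s a (x : carM s) :
  ~ supp s a x <-> exists S, supported s S x /\ ~ In a S.
Proof.
  unfold suppM, in_supp; split.
  - intro H; apply not_all_ex_not in H; destruct H as [S H].
    exists S; unfold supported; tauto.
  - intros [S [H1 H2]] H; apply H2, H, H1.
Qed.

Lemma fresh_atom_for (L : list atm) al s (x : carM s) :
  exists c : atm, fst c = al /\ ~ In c L /\ ~ supp s c x.
Proof.
  destruct (finitely_supported s x) as [S HS].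
  destruct (fresh_atom Sg (L ++ S) al) as [c [Hc Hn]]; rewrite in_app_iff in Hn.
  exists c; split; [exact Hc | split; [tauto|]].
  apply notin_supp_iff; exists S; split; [exact HS | tauto].
Qed.

Lemma supp_name_iff al b (u : carM (SName al)) : supp (SName al) b u <-> b = proj1_sig u.
Proof.
  split.
  - intro H; specialize (H _ (supported_name al u)); simpl in H; intuition.
  - intros E; subst b; apply NNPP; intro N.
    apply notin_supp_iff in N; destruct N as [S [HS Hn]].
    destruct (fresh_atom Sg (proj1_sig u :: S) al) as [c [Hc Hcn]].
    assert (Hs : fst (proj1_sig u) = fst c) by (rewrite Hc; apply (proj2_sig u)).
    assert (K : actM (perm_swap _ _ Hs) (SName al) u = u).
    { apply HS, perm_swap_fix_out; [exact Hn | intro K; apply Hcn; right; exact K]. }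
    apply (f_equal (@proj1_sig _ _)) in K; simpl in K; unfold swap_atom in K.
    destruct atom_dec; [|congruence]; apply Hcn; left; congruence.
Qed.

(* The transposition (a b) factors as (a c)(b c)(a c) for an atom c outside
   finite supports of x avoiding a and b, and each factor fixes x. *)
Lemma swap_fresh_fix a b (H : fst a = fst b) s (x : carM s) :
  ~ supp s a x -> ~ supp s b x -> actM (perm_swap a b H) s x = x.
Proof.
  intros Ha Hb; destruct (atom_dec a b) as [<-|nab].
  { replace (perm_swap a a H) with (perm_id Sg) by
      (apply perm_ext; intro d; simpl; unfold swap_atom; repeat destruct atom_dec; congruence).
    apply act_id. }
  apply notin_supp_iff in Ha, Hb; destruct Ha as [S1 [H1 N1]], Hb as [S2 [H2 N2]].
  destruct (fresh_atom Sg (a :: b :: S1 ++ S2) (fst a)) as [c [Hc Hn]]; simpl in Hn.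
  rewrite in_app_iff in Hn.
  assert (Hac : fst a = fst c) by auto.
  assert (Hbc : fst b = fst c) by congruence.
  assert (E : perm_swap a b H =
              perm_comp Sg (perm_swap a c Hac)
                (perm_comp Sg (perm_swap b c Hbc) (perm_swap a c Hac))).
  { apply perm_ext; intro d; simpl; unfold swap_atom.
    repeat destruct atom_dec; subst; tauto || congruence. }
  assert (F1 : actM (perm_swap a c Hac) s x = x) by (apply H1, perm_swap_fix_out; tauto).
  assert (F2 : actM (perm_swap b c Hbc) s x = x) by (apply H2, perm_swap_fix_out; tauto).
  rewrite E, !act_comp, F1, F2, F1; reflexivity.
Qed.

Lemma fresh_pair_iff s1 s2 a (w : carM (SProd s1 s2)) :
  ~ supp (SProd s1 s2) a w <-> ~ supp s1 a (fst w) /\ ~ supp s2 a (snd w).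
Proof.
  split.
  - intro H; split; intros K; apply H; intros S HS; apply K; intros p Hp;
      specialize (HS p Hp); destruct w; simpl in *; injection HS; auto.
  - intros [H1 H2]; apply notin_supp_iff in H1, H2; apply notin_supp_iff.
    destruct H1 as [S1 [K1 N1]], H2 as [S2 [K2 N2]].
    exists (S1 ++ S2); split; [apply supported_pair; assumption | rewrite in_app_iff; tauto].
Qed.

Lemma val_supp_var r x t c a :
  vvar Sg M r x t = Some c -> supp t a c -> val_supp Sg M r a.
Proof. intros E K; left; exists x, t, c; auto. Qed.

Lemma val_supp_name r n be c a :
  vname Sg M r n be = Some c -> supp (SName be) a c -> val_supp Sg M r a.
Proof. intros E K; apply supp_name_iff in K; right; exists n, be, c; auto. Qed.

Definition val_supported (r : valuation Sg M) : Prop :=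
  exists S, (forall x s v, vvar Sg M r x s = Some v -> supported s S v) /\
            (forall n al v, vname Sg M r n al = Some v -> supported (SName al) S v).

Lemma valid_val_supported r : valid_val Sg M r -> val_supported r.
Proof. intros (_ & _ & [S [H1 H2]] & _); exists S; split; assumption. Qed.

Lemma fresh_name_for r al s (x : carM s) : val_supported r ->
  exists u : carM (SName al), ~ val_supp Sg M r (proj1_sig u) /\ ~ supp s (proj1_sig u) x.
Proof.
  intros [S [H1 H2]]; destruct (fresh_atom_for S al s x) as [c [Hc [Hn Hx]]].
  exists (exist _ c Hc); simpl; split; [|exact Hx].
  intros [(y & t & v & E & K)|(n & be & u & E & <-)].
  - apply Hn, K, (H1 _ _ _ E).
  - apply Hn, (proj2 (supp_name_iff be _ u) eq_refl), (H2 _ _ _ E).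
Qed.

Lemma upd_var_eq r x t u : vvar Sg M (upd_var Sg M r x t u) x t = Some u.
Proof.
  unfold upd_var; simpl; destruct (Nat.eq_dec x x) as [_|]; [|congruence].
  destruct (sort_dec Sg t t) as [e|]; [|congruence].
  rewrite (UIP_dec (sort_dec Sg) e eq_refl); reflexivity.
Qed.

Lemma upd_var_neq r x t u y s : (y, s) <> (x, t) ->
  vvar Sg M (upd_var Sg M r x t u) y s = vvar Sg M r y s.
Proof.
  intro N; unfold upd_var; simpl; destruct (Nat.eq_dec y x); [|reflexivity].
  destruct (sort_dec Sg t s); [subst; congruence | reflexivity].
Qed.

Lemma upd_name_eq r n al u : vname Sg M (upd_name Sg M r n al u) n al = Some u.
Proof.
  unfold upd_name; simpl; destruct (Nat.eq_dec n n) as [_|]; [|congruence].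
  destruct (NS_dec Sg al al) as [e|]; [|congruence].
  rewrite (UIP_dec (NS_dec Sg) e eq_refl); reflexivity.
Qed.

Lemma upd_name_neq r n al u m be : (m, be) <> (n, al) ->
  vname Sg M (upd_name Sg M r n al u) m be = vname Sg M r m be.
Proof.
  intro N; unfold upd_name; simpl; destruct (Nat.eq_dec m n); [|reflexivity].
  destruct (NS_dec Sg al be); [subst; congruence | reflexivity].
Qed.

Lemma val_supported_upd_var r x t u :
  val_supported r -> val_supported (upd_var Sg M r x t u).
Proof.
  intros [S [H1 H2]]; destruct (finitely_supported t u) as [T HT].
  exists (S ++ T); split.
  - intros y s v E; destruct (sort_dec Sg t s) as [<-|]; [destruct (Nat.eq_dec y x) as [->|]|].
    + rewrite upd_var_eq in E; injection E as <-; apply supported_app_r, HT.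
    + rewrite upd_var_neq in E by congruence; apply supported_app_l, (H1 _ _ _ E).
    + rewrite upd_var_neq in E by congruence; apply supported_app_l, (H1 _ _ _ E).
  - intros n al v E; apply supported_app_l, (H2 _ _ _ E).
Qed.

Lemma val_supported_upd_name r n al u :
  val_supported r -> val_supported (upd_name Sg M r n al u).
Proof.
  intros [S [H1 H2]]; exists (S ++ [proj1_sig u]); split.
  - intros y s v E; apply supported_app_l, (H1 _ _ _ E).
  - intros m be v E; destruct (NS_dec Sg al be) as [<-|]; [destruct (Nat.eq_dec m n) as [->|]|].
    + rewrite upd_name_eq in E; injection E as <-; apply supported_app_r, supported_name.
    + rewrite upd_name_neq in E by congruence; apply supported_app_l, (H2 _ _ _ E).
    + rewrite upd_name_neq in E by congruence; apply supported_app_l, (H2 _ _ _ E).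
Qed.

(** * Renaming under atom permutations *)

Definition perm_send (p : perm Sg) be (b0 b1 : carM (SName be)) : perm Sg :=
  perm_comp Sg (perm_swap (PF p (proj1_sig b0)) (proj1_sig b1)
    (eq_trans (eq_trans (pf_sort Sg p _) (proj2_sig b0)) (eq_sym (proj2_sig b1)))) p.

Lemma perm_send_sends p be b0 b1 : actM (perm_send p be b0 b1) (SName be) b0 = b1.
Proof. apply name_eq; simpl; unfold swap_atom; destruct atom_dec; congruence. Qed.

Lemma perm_send_fix p be (b0 b1 : carM (SName be)) s (u : carM s) :
  ~ supp s (proj1_sig b0) u -> ~ supp s (proj1_sig b1) (actM p s u) ->
  actM (perm_send p be b0 b1) s u = actM p s u.
Proof.
  intros H0 H1; unfold perm_send; rewrite act_comp; apply swap_fresh_fix; [|exact H1].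
  rewrite supp_act_iff; exact H0.
Qed.

Lemma perm_send_fix_opt p be (b0 b1 : carM (SName be)) s (o : option (carM s)) :
  (forall c, o = Some c ->
     ~ supp s (proj1_sig b0) c /\ ~ supp s (proj1_sig b1) (actM p s c)) ->
  option_map (actM (perm_send p be b0 b1) s) o = option_map (actM p s) o.
Proof.
  destruct o as [c|]; simpl; intro H; [|reflexivity].
  destruct (H c eq_refl); f_equal; apply perm_send_fix; assumption.
Qed.

(* Each side of an И-quantifier can be witnessed by any atom fresh for its
   valuation and value. *)
Lemma denote_new_transfer s n be (q1 q2 : pat Sg s) r1 r2 p (v : carM s) :
  val_supported r1 -> val_supported r2 ->
  (forall b0 b1 : carM (SName be),
     ~ val_supp Sg M r1 (proj1_sig b0) -> ~ val_supp Sg M r2 (proj1_sig b1) ->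
     forall w, denote Sg M q1 (upd_name Sg M r1 n be b0) w <->
               denote Sg M q2 (upd_name Sg M r2 n be b1) (actM (perm_send p be b0 b1) s w)) ->
  denote Sg M (PNew n be q1) r1 v <-> denote Sg M (PNew n be q2) r2 (actM p s v).
Proof.
  intros F1 F2 Hq; simpl; split.
  - intros (b0 & H0 & Hd & Hs).
    destruct (fresh_name_for r2 be s (actM p s v) F2) as [b1 [H1 Hs1]].
    exists b1; split; [exact H1 | split; [|exact Hs1]].
    rewrite <- (perm_send_fix p be b0 b1) by assumption.
    apply Hq; assumption.
  - intros (b1 & H1 & Hd & Hs).
    destruct (fresh_name_for r1 be s v F1) as [b0 [H0 Hs0]].
    exists b0; split; [exact H0 | split; [|exact Hs0]].
    apply (Hq b0 b1 H0 H1); rewrite perm_send_fix by assumption; exact Hd.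
Qed.

Section Renaming.
Variable al : NS Sg.
Variable za : nat.

(* [r2] is [p . r1] on the variables [FV] and the names [FN], except that the
   name [(a, al)] of [r1] is matched by the variable [za] of [r2]. *)
Definition agree FV FN a (r1 r2 : valuation Sg M) p : Prop :=
  (forall x t, In (x, t) FV ->
     vvar Sg M r2 x t = option_map (actM p t) (vvar Sg M r1 x t)) /\
  (forall n be, In (n, be) FN -> (n, be) <> (a, al) ->
     vname Sg M r2 n be = option_map (actM p (SName be)) (vname Sg M r1 n be)) /\
  (In (a, al) FN ->
     vvar Sg M r2 za (SName al) = option_map (actM p (SName al)) (vname Sg M r1 a al)).

Lemma agree_app_inv FV1 FV2 FN1 FN2 a r1 r2 p :
  agree (FV1 ++ FV2) (FN1 ++ FN2) a r1 r2 p ->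
  agree FV1 FN1 a r1 r2 p /\ agree FV2 FN2 a r1 r2 p.
Proof.
  intros (Av & An & Az); repeat split; intros;
    first [apply Av | apply An | apply Az]; auto using in_or_app.
Qed.

Lemma agree_upd_var s x t (q : pat Sg s) a r1 r2 p u :
  (za, SName al) <> (x, t) -> agree (fvars (PEx x t q)) (fnames q) a r1 r2 p ->
  agree (fvars q) (fnames q) a
    (upd_var Sg M r1 x t u) (upd_var Sg M r2 x t (actM p t u)) p.
Proof.
  intros Nz (Av & An & Az); split; [|split].
  - intros y s' Hy; destruct (var_dec (y, s') (x, t)) as [E|N].
    + injection E as -> ->; rewrite !upd_var_eq; reflexivity.
    + rewrite !upd_var_neq by exact N; apply Av, in_fvars_ex; split; assumption.
  - exact An.
  - intro Hin; rewrite upd_var_neq by exact Nz; apply Az, Hin.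
Qed.

(* Either the binder does not shadow [(a, al)] and [a' = a], or it does and [a']
   is a dummy name not free in [q]. *)
Lemma agree_upd_name s n be (q : pat Sg s) a a' r1 r2 p b0 b1 :
  ~ val_supp Sg M r1 (proj1_sig b0) -> ~ val_supp Sg M r2 (proj1_sig b1) ->
  agree (fvars q) (fnames (PNew n be q)) a r1 r2 p ->
  a' = a \/ (n, be) = (a, al) ->
  (In (a', al) (fnames q) -> a' = a /\ (n, be) <> (a, al)) ->
  agree (fvars q) (fnames q) a'
    (upd_name Sg M r1 n be b0) (upd_name Sg M r2 n be b1) (perm_send p be b0 b1).
Proof.
  intros H0 H1 (Av & An & Az) Ha' Hin'; split; [|split].
  - intros x t Hx; cbn [vvar upd_name]; rewrite (Av x t Hx); symmetry.
    apply perm_send_fix_opt; intros c Ec; split; intro K.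
    + exact (H0 (val_supp_var r1 x t c _ Ec K)).
    + apply H1, (val_supp_var r2 x t (actM p t c)); [rewrite Av, Ec|]; auto.
  - intros m ga Hm Hne; destruct (name_dec (m, ga) (n, be)) as [E|N].
    + injection E as -> ->; rewrite !upd_name_eq; cbn [option_map].
      rewrite perm_send_sends; reflexivity.
    + assert (Hm' : (m, ga) <> (a, al)) by (destruct Ha' as [<-|<-]; assumption).
      assert (Hin : In (m, ga) (fnames (PNew n be q))) by (apply in_fnames_new; auto).
      rewrite !upd_name_neq by exact N; rewrite (An m ga Hin Hm'); symmetry.
      apply perm_send_fix_opt; intros c Ec; split; intro K.
      * exact (H0 (val_supp_name r1 m ga c _ Ec K)).
      * apply H1, (val_supp_name r2 m ga (actM p (SName ga) c));
          [rewrite An, Ec|]; auto.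
  - intro Hin; destruct (Hin' Hin) as [-> Hne].
    assert (Hin2 : In (a, al) (fnames (PNew n be q))) by (apply in_fnames_new; auto).
    cbn [vvar upd_name]; rewrite upd_name_neq by auto; rewrite (Az Hin2); symmetry.
    apply perm_send_fix_opt; intros c Ec; split; intro K.
    + exact (H0 (val_supp_name r1 a al c _ Ec K)).
    + apply H1, (val_supp_var r2 za (SName al) (actM p (SName al) c));
        [rewrite Az, Ec|]; auto.
Qed.

Definition nsubst_invariant s (q : pat Sg s) : Prop :=
  forall a r1 r2 p, ~ In (za, SName al) (allvars q) ->
  val_supported r1 -> val_supported r2 -> agree (fvars q) (fnames q) a r1 r2 p ->
  forall v, denote Sg M q r1 v <-> denote Sg M (nsubst a al za q) r2 (actM p s v).

Definition nsubst_args_invariant l (qs : pats Sg l) : Prop :=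
  forall a r1 r2 p, ~ In (za, SName al) (allvars_args Sg qs) ->
  val_supported r1 -> val_supported r2 ->
  agree (fvars_args Sg qs) (fnames_args Sg qs) a r1 r2 p ->
  forall u, denote_args Sg M qs r1 u <->
            denote_args Sg M (nsubst_args Sg a al za qs) r2 (actsM p l u).

Lemma nsubst_invariant_var x s : nsubst_invariant s (PVar x s).
Proof.
  intros a r1 r2 p _ _ _ [Av _] v; simpl.
  rewrite (Av x s (or_introl eq_refl)); symmetry; apply option_map_act_inj.
Qed.

Lemma nsubst_invariant_name n be : nsubst_invariant (SName be) (PName n be).
Proof.
  intros a r1 r2 p _ _ _ (_ & An & Az) v; cbn [nsubst].
  destruct (name_dec (n, be) (a, al)) as [E|N].
  - rewrite (proj2 (name_eqb_eq _ _) E); injection E as -> ->; cbn [denote].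
    rewrite (Az (or_introl eq_refl)); symmetry; apply option_map_act_inj.
  - rewrite (name_eqb_neq _ _ N); cbn [denote].
    rewrite (An n be (or_introl eq_refl) N); symmetry; apply option_map_act_inj.
Qed.

Lemma nsubst_invariant_and s (q1 q2 : pat Sg s) :
  nsubst_invariant s q1 -> nsubst_invariant s q2 -> nsubst_invariant s (PAnd q1 q2).
Proof.
  intros IH1 IH2 a r1 r2 p Hz F1 F2 Ag v; simpl in *; rewrite in_app_iff in Hz.
  destruct (agree_app_inv _ _ _ _ _ _ _ _ Ag) as [Ag1 Ag2].
  rewrite (IH1 a r1 r2 p ltac:(tauto) F1 F2 Ag1), (IH2 a r1 r2 p ltac:(tauto) F1 F2 Ag2).
  reflexivity.
Qed.

Lemma nsubst_invariant_not s (q : pat Sg s) :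
  nsubst_invariant s q -> nsubst_invariant s (PNot q).
Proof.
  intros IH a r1 r2 p Hz F1 F2 Ag v; simpl in *; rewrite (IH a r1 r2 p Hz F1 F2 Ag).
  reflexivity.
Qed.

Lemma nsubst_invariant_ex s x t (q : pat Sg s) :
  nsubst_invariant s q -> nsubst_invariant s (PEx x t q).
Proof.
  intros IH a r1 r2 p Hz F1 F2 Ag v; simpl in Hz |- *.
  apply (ex_act_iff p t); intro u.
  apply IH; auto using val_supported_upd_var.
  apply agree_upd_var; [intro E; apply Hz; left; congruence | exact Ag].
Qed.

Lemma nsubst_invariant_sym sg (qs : pats Sg (sym_args Sg sg)) :
  nsubst_args_invariant _ qs -> nsubst_invariant _ (PSym sg qs).
Proof.
  intros IH a r1 r2 p Hz F1 F2 Ag v; simpl in Hz |- *.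
  apply (ex_acts_iff p); intro u.
  rewrite (IH a r1 r2 p Hz F1 F2 Ag u), (minterp_equiv Sg M sg p u v); reflexivity.
Qed.

Lemma nsubst_invariant_new s n be (q : pat Sg s) :
  nsubst_invariant s q -> nsubst_invariant s (PNew n be q).
Proof.
  intros IH a r1 r2 p Hz F1 F2 Ag v; simpl in Hz; cbn [nsubst].
  destruct (name_dec (n, be) (a, al)) as [E|N].
  - rewrite (proj2 (name_eqb_eq _ _) E).
    destruct (nat_fresh (map fst (fnames q))) as [a' Ha'].
    assert (Ha'q : ~ In (a', al) (fnames q)) by (intro K; apply Ha', (in_map fst _ _ K)).
    apply denote_new_transfer; auto; intros b0 b1 H0 H1 w.
    rewrite <- (proj1 (nsubst_fresh Sg a' al za) _ q Ha'q) at 2.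
    apply IH; auto using val_supported_upd_name.
    apply (agree_upd_name _ _ _ _ a); tauto.
  - rewrite (name_eqb_neq _ _ N).
    apply denote_new_transfer; auto; intros b0 b1 H0 H1 w.
    apply IH; auto using val_supported_upd_name.
    apply (agree_upd_name _ _ _ _ a); auto.
Qed.

Lemma nsubst_invariant_pair s1 s2 (q1 : pat Sg s1) (q2 : pat Sg s2) :
  nsubst_invariant s1 q1 -> nsubst_invariant s2 q2 -> nsubst_invariant _ (PPair q1 q2).
Proof.
  intros IH1 IH2 a r1 r2 p Hz F1 F2 Ag v; simpl in *; rewrite in_app_iff in Hz.
  destruct (agree_app_inv _ _ _ _ _ _ _ _ Ag) as [Ag1 Ag2].
  rewrite (IH1 a r1 r2 p ltac:(tauto) F1 F2 Ag1), (IH2 a r1 r2 p ltac:(tauto) F1 F2 Ag2).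
  reflexivity.
Qed.

Lemma nsubst_invariant_fresh be t (q1 : pat Sg (SName be)) (q2 : pat Sg t) :
  nsubst_invariant _ q1 -> nsubst_invariant t q2 -> nsubst_invariant _ (PFresh q1 q2).
Proof.
  intros IH1 IH2 a r1 r2 p Hz F1 F2 Ag v; simpl in *; rewrite in_app_iff in Hz.
  destruct (agree_app_inv _ _ _ _ _ _ _ _ Ag) as [Ag1 Ag2].
  apply (ex_act_iff p (SName be)); intro b; apply (ex_act_iff p t); intro u.
  rewrite (IH1 a r1 r2 p ltac:(tauto) F1 F2 Ag1), (IH2 a r1 r2 p ltac:(tauto) F1 F2 Ag2).
  simpl proj1_sig; rewrite supp_act_iff; reflexivity.
Qed.

Lemma nsubst_invariant_ceil t (q : pat Sg SPred) :
  nsubst_invariant _ q -> nsubst_invariant t (PCeil t q).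
Proof.
  intros IH a r1 r2 p Hz F1 F2 Ag v; simpl in *.
  apply (ex_act_iff p SPred); intro u; apply (IH a r1 r2 p Hz F1 F2 Ag).
Qed.

Lemma nsubst_args_invariant_nil : nsubst_args_invariant _ PNil.
Proof. intros a r1 r2 p _ _ _ _ u; simpl; tauto. Qed.

Lemma nsubst_args_invariant_cons s l (q : pat Sg s) (qs : pats Sg l) :
  nsubst_invariant s q -> nsubst_args_invariant l qs ->
  nsubst_args_invariant _ (PCons q qs).
Proof.
  intros IH1 IH2 a r1 r2 p Hz F1 F2 Ag u; simpl in *; rewrite in_app_iff in Hz.
  destruct (agree_app_inv _ _ _ _ _ _ _ _ Ag) as [Ag1 Ag2].
  rewrite (IH1 a r1 r2 p ltac:(tauto) F1 F2 Ag1), (IH2 a r1 r2 p ltac:(tauto) F1 F2 Ag2).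
  reflexivity.
Qed.

Lemma nsubst_act_invariant :
  (forall s q, nsubst_invariant s q) /\ (forall l qs, nsubst_args_invariant l qs).
Proof.
  apply pat_pats_ind; intros;
    auto using nsubst_invariant_var, nsubst_invariant_name, nsubst_invariant_and,
      nsubst_invariant_not, nsubst_invariant_ex, nsubst_invariant_sym,
      nsubst_invariant_new, nsubst_invariant_pair, nsubst_invariant_fresh,
      nsubst_invariant_ceil, nsubst_args_invariant_nil, nsubst_args_invariant_cons.
Qed.

End Renaming.

(** * The freshness guard *)

Lemma fresh_bs_tup_iff bs T (t : pat Sg T) r b :
  (exists w, denote Sg M (bs_tup Sg bs t) r w /\ ~ supp _ b w) <->
  (forall m ga, In (m, ga) bs ->
     exists c, vname Sg M r m ga = Some c /\ ~ supp (SName ga) b c) /\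
  (exists w, denote Sg M t r w /\ ~ supp T b w).
Proof.
  induction bs as [|[m0 ga0] bs IH]; simpl.
  - split; [intro H; split; [contradiction | exact H] | tauto].
  - split.
    + intros [[c w] [[Hc Hw] Hs]]; apply fresh_pair_iff in Hs; destruct Hs as [Hs1 Hs2].
      destruct (proj1 IH (ex_intro _ w (conj Hw Hs2))) as [IHn IHt].
      split; [|exact IHt]; intros m ga [E|Hin]; [|exact (IHn m ga Hin)].
      injection E; intros; subst; exists c; split; assumption.
    + intros [Hn Ht]; destruct (Hn m0 ga0 (or_introl eq_refl)) as [c [Hc Nc]].
      destruct (proj2 IH (conj (fun m ga H => Hn m ga (or_intror H)) Ht)) as [w [Hw Nw]].
      exists (c, w); split; [split; assumption | apply fresh_pair_iff; split; assumption].
Qed.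

Lemma fresh_xs_tup_iff xs y tau r b :
  (exists w, denote Sg M (xs_tup Sg xs y tau) r w /\ ~ supp _ b w) <->
  (forall x s, In (x, s) xs -> exists c, vvar Sg M r x s = Some c /\ ~ supp s b c) /\
  (exists c, vvar Sg M r y tau = Some c /\ ~ supp tau b c).
Proof.
  induction xs as [|[x0 s0] xs IH]; simpl.
  - split; [intro H; split; [contradiction | exact H] | tauto].
  - split.
    + intros [[c w] [[Hc Hw] Hs]]; apply fresh_pair_iff in Hs; destruct Hs as [Hs1 Hs2].
      destruct (proj1 IH (ex_intro _ w (conj Hw Hs2))) as [IHx IHy].
      split; [|exact IHy]; intros x s [E|Hin]; [|exact (IHx x s Hin)].
      injection E; intros; subst; exists c; split; assumption.
    + intros [Hx Hy]; destruct (Hx x0 s0 (or_introl eq_refl)) as [c [Hc Nc]].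
      destruct (proj2 IH (conj (fun x s H => Hx x s (or_intror H)) Hy)) as [w [Hw Nw]].
      exists (c, w); split; [split; assumption | apply fresh_pair_iff; split; assumption].
Qed.

Section NewElimination.
Variable tau : srt.
Variable al : NS Sg.
Variable phi : pat Sg tau.
Variable xs : list (nat * srt).
Variable bs : list (nat * NS Sg).
Variables a za y : nat.
Hypothesis fvars_phi : forall v, In v (fvars phi) -> In v xs.
Hypothesis fnames_phi : forall n, In n (fnames phi) -> In n bs \/ n = (a, al).
Hypothesis za_notin_phi : ~ In (za, SName al) (allvars phi).
Hypothesis za_notin_xs : ~ In (za, SName al) xs.
Hypothesis za_neq_y : (za, SName al) <> (y, tau).
Hypothesis y_notin_xs : ~ In (y, tau) xs.

Definition fresh_for_tuple (r : valuation Sg M) (b : atm) (v : carM tau) : Prop :=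
  (forall m ga, In (m, ga) bs ->
     exists c, vname Sg M r m ga = Some c /\ ~ supp (SName ga) b c) /\
  (forall x s, In (x, s) xs -> exists c, vvar Sg M r x s = Some c /\ ~ supp s b c) /\
  ~ supp tau b v.

Lemma denote_fresh_guard r (u : carM (SName al)) v :
  denote Sg M (fresh_guard al za bs xs y tau) (upd_var Sg M r za (SName al) u) v <->
  fresh_for_tuple r (proj1_sig u) v.
Proof.
  set (r' := upd_var Sg M (upd_var Sg M r za (SName al) u) y tau v).
  assert (Lx : forall x s, In (x, s) xs -> vvar Sg M r' x s = vvar Sg M r x s).
  { intros x s Hx; unfold r'; rewrite !upd_var_neq; try reflexivity;
      intro E; rewrite E in Hx; contradiction. }
  transitivity (exists w, denote Sg M (tuple_pat Sg bs xs y tau) r' w /\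
                          ~ supp _ (proj1_sig u) w).
  { unfold fresh_guard; cbn [denote]; split.
    - intros (w & Hy & _ & a0 & w' & Hz & Ht & Hs).
      rewrite upd_var_eq in Hy; injection Hy as ->.
      rewrite upd_var_neq, upd_var_eq in Hz by exact za_neq_y; injection Hz as <-.
      exists w'; split; assumption.
    - intros (w' & Ht & Hs); exists v; split; [apply upd_var_eq|].
      exists tt, u, w'; split; [|split; assumption].
      rewrite upd_var_neq by exact za_neq_y; apply upd_var_eq. }
  unfold tuple_pat, fresh_for_tuple; rewrite fresh_bs_tup_iff, fresh_xs_tup_iff.
  unfold r' at 3; rewrite upd_var_eq; split.
  - intros (Hn & Hx & c & Ec & Hc); injection Ec as <-; repeat split; auto.
    intros x s Hin; rewrite <- Lx by exact Hin; auto.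
  - intros (Hn & Hx & Hv); repeat split; eauto.
    intros x s Hin; rewrite Lx by exact Hin; auto.
Qed.

Lemma fresh_for_tuple_intro r b v :
  suitable Sg M r (PEx za (SName al)
                     (PAnd (fresh_guard al za bs xs y tau) (nsubst a al za phi))) ->
  ~ val_supp Sg M r b -> ~ supp tau b v -> fresh_for_tuple r b v.
Proof.
  intros [Sv Sn] Hr Hv; split; [|split; [|exact Hv]].
  - intros m ga Hm; destruct (vname Sg M r m ga) as [c|] eqn:Ec.
    + exists c; split; [reflexivity|]; intro K; exact (Hr (val_supp_name r m ga c b Ec K)).
    + exfalso; apply (Sn (m, ga)); [|exact Ec].
      cbn [fnames]; apply in_or_app; left; unfold fresh_guard, tuple_pat.
      cbn [fnames app]; apply fnames_bs_tup, Hm.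
  - intros x s Hx; destruct (vvar Sg M r x s) as [c|] eqn:Ec.
    + exists c; split; [reflexivity|]; intro K; exact (Hr (val_supp_var r x s c b Ec K)).
    + exfalso; apply (Sv (x, s)); [|exact Ec].
      apply in_fvars_ex; split; [|intro E; rewrite E in Hx; contradiction].
      cbn [fvars]; apply in_or_app; left; unfold fresh_guard.
      apply in_fvars_ex; split; [|intro E; rewrite E in Hx; contradiction].
      cbn [fvars app]; right; right; unfold tuple_pat; rewrite fvars_bs_tup.
      apply fvars_xs_tup, Hx.
Qed.

(* Both sides are evaluated at atoms fresh for the tuple; the transposition of
   these atoms fixes all the data phi depends on, so the renaming lemma applies. *)
Lemma denote_nsubst_fresh_atoms r (a0 a1 : carM (SName al)) v :
  val_supported r ->
  fresh_for_tuple r (proj1_sig a0) v -> fresh_for_tuple r (proj1_sig a1) v ->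
  denote Sg M phi (upd_name Sg M r a al a0) v <->
  denote Sg M (nsubst a al za phi) (upd_var Sg M r za (SName al) a1) v.
Proof.
  intros F (N0 & X0 & V0) (N1 & X1 & V1).
  assert (E01 : fst (proj1_sig a0) = fst (proj1_sig a1))
    by (rewrite (proj2_sig a0), (proj2_sig a1); reflexivity).
  rewrite <- (swap_fresh_fix _ _ E01 tau v V0 V1) at 2.
  apply (proj1 (nsubst_act_invariant al za) tau phi a);
    auto using val_supported_upd_name, val_supported_upd_var.
  split; [|split].
  - intros x t Hx.
    assert (Nz : (x, t) <> (za, SName al)).
    { intro E; rewrite E in Hx; apply za_notin_phi, (proj1 (fvars_in_allvars Sg)), Hx. }
    destruct (X0 x t (fvars_phi _ Hx)) as [c [Ec Hc0]].
    destruct (X1 x t (fvars_phi _ Hx)) as [c' [Ec' Hc1]].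
    rewrite Ec in Ec'; injection Ec' as <-.
    cbn [vvar upd_name]; rewrite upd_var_neq, Ec by exact Nz; cbn [option_map].
    rewrite swap_fresh_fix; auto.
  - intros n be Hn Hne; destruct (fnames_phi _ Hn) as [Hb|]; [|contradiction].
    destruct (N0 n be Hb) as [c [Ec Hc0]], (N1 n be Hb) as [c' [Ec' Hc1]].
    rewrite Ec in Ec'; injection Ec' as <-.
    cbn [vname upd_var]; rewrite upd_name_neq, Ec by exact Hne; cbn [option_map].
    rewrite swap_fresh_fix; auto.
  - intros _; rewrite upd_var_eq, upd_name_eq; cbn [option_map]; f_equal.
    apply name_eq; simpl; unfold swap_atom; destruct atom_dec; congruence.
Qed.

Lemma new_iff_ex_guarded :
  pequiv M (PNew a al phi)
    (PEx za (SName al) (PAnd (fresh_guard al za bs xs y tau) (nsubst a al za phi))).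
Proof.
  intros r Hr _ Hs v; apply valid_val_supported in Hr; cbn [denote]; split.
  - intros (a0 & Hv & Hphi & Hsp).
    assert (Fa0 : fresh_for_tuple r (proj1_sig a0) v) by (apply fresh_for_tuple_intro; auto).
    exists a0; split; [apply denote_fresh_guard, Fa0|].
    exact (proj1 (denote_nsubst_fresh_atoms r a0 a0 v Hr Fa0 Fa0) Hphi).
  - intros [u [Hg Hphi]]; apply denote_fresh_guard in Hg.
    destruct (fresh_name_for r al tau v Hr) as [a0 [Hv Hsp]].
    exists a0; split; [exact Hv | split; [|exact Hsp]].
    refine (proj2 (denote_nsubst_fresh_atoms r a0 u v Hr _ Hg) Hphi).
    apply fresh_for_tuple_intro; assumption.
Qed.

Lemma new_iff_all_guarded :
  pequiv M (PNew a al phi)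
    (PAll za (SName al) (PImp (fresh_guard al za bs xs y tau) (nsubst a al za phi))).
Proof.
  intros r Hr _ Hs v; apply valid_val_supported in Hr; cbn [denote PAll PImp POr]; split.
  - intros (a0 & Hv & Hphi & Hsp) [u Hu]; apply Hu; intros [Hg Hphi'].
    apply NNPP, denote_fresh_guard in Hg; apply Hphi'.
    refine (proj1 (denote_nsubst_fresh_atoms r a0 u v Hr _ Hg) Hphi).
    apply fresh_for_tuple_intro; assumption.
  - intro H; destruct (fresh_name_for r al tau v Hr) as [a0 [Hv Hsp]].
    assert (Fa0 : fresh_for_tuple r (proj1_sig a0) v) by (apply fresh_for_tuple_intro; auto).
    exists a0; split; [exact Hv | split; [|exact Hsp]].
    apply (proj2 (denote_nsubst_fresh_atoms r a0 a0 v Hr Fa0 Fa0)).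
    apply NNPP; intro Hn; apply H; exists a0; intros K; apply K; split; [|exact Hn].
    intro G; apply G, denote_fresh_guard, Fa0.
Qed.

End NewElimination.
End Model.

Theorem mainTheorem10 (Sg : signature) (M : model Sg) (tau : sort (NS Sg) (BS Sg))
  (al : NS Sg) (phi : pat Sg tau)
  (xs : list (nat * sort (NS Sg) (BS Sg))) (bs : list (nat * NS Sg))
  (a za y : nat) :
  (forall v, In v (fvars phi) -> In v xs) ->
  (forall n, In n (fnames phi) -> In n bs \/ n = (a, al)) ->
  ~ In (a, al) bs ->
  ~ In (za, SName al) (allvars phi) ->
  ~ In (za, SName al) xs ->
  (za, SName al) <> (y, tau) ->
  ~ In (y, tau) xs ->
  pequiv M (PNew a al phi)
    (PEx za (SName al) (PAnd (fresh_guard al za bs xs y tau) (nsubst a al za phi)))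
  /\
  pequiv M (PNew a al phi)
    (PAll za (SName al) (PImp (fresh_guard al za bs xs y tau) (nsubst a al za phi))).
Proof.
  intros Hfv Hfn _ Hzphi Hzxs Hzy Hyxs; split.
  - apply new_iff_ex_guarded; assumption.
  - apply new_iff_all_guarded; assumption.
Qed.
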